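(* Let $\mathcal V=(0,1/16)^2$ and let $\mathcal K$ be the set of $(p,q)\in\mathcal V$ for which $K_{pq}$ is a twofold Cantor set. Then $\mathcal K$ has full two-dimensional Lebesgue measure in $\mathcal V$, and its complement $\mathcal V\setminus\mathcal K$ is uncountable and dense in $\mathcal V$.
   Context: For $p,q\in(0,1/2)$ let $S_1(x)=px$, $S_2(x)=qx$, $S_3(x)=px+1-p$, $S_4(x)=qx+1-q$, let $K_{pq}$ be the attractor of $\{S_1,S_2,S_3,S_4\}$ (the unique nonempty compact $K\subset\mathbb R$ with $K=\bigcup_{i=1}^4S_i(K)$), and let $A=S_3(K_{pq})\cup S_4(K_{pq})$. $K_{pq}$ is called a twofold Cantor set if $S_1^m(A)\cap S_2^n(A)=\varnothing$ for all $m,n\in\mathbb N$. *)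

From HB Require Import structures.
From mathcomp Require Import all_boot all_order all_algebra.
From mathcomp Require Import all_classical all_reals all_analysis.
Set Implicit Arguments. Unset Strict Implicit. Unset Printing Implicit Defensive.
Import Order.TTheory GRing.Theory Num.Theory.
Import numFieldNormedType.Exports.
Local Open Scope classical_set_scope.
Local Open Scope ring_scope.

Definition S1 {R : realType} (p q x : R) : R := p * x.
Definition S2 {R : realType} (p q x : R) : R := q * x.
Definition S3 {R : realType} (p q x : R) : R := p * x + 1 - p.
Definition S4 {R : realType} (p q x : R) : R := q * x + 1 - q.

(* K is the attractor of {S1,S2,S3,S4}: nonempty compact with K = U S_i(K).
   (Unique by Hutchinson's theorem.) *)
Definition is_attractor {R : realType} (p q : R) (K : set R) : Prop :=
  K !=set0 /\ compact K /\
  K = (S1 p q @` K) `|` (S2 p q @` K) `|` (S3 p q @` K) `|` (S4 p q @` K).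

Definition setA {R : realType} (p q : R) (K : set R) : set R :=
  (S3 p q @` K) `|` (S4 p q @` K).

Definition twofold {R : realType} (p q : R) : Prop :=
  exists K : set R, is_attractor p q K /\
    forall m n : nat, (0 < m)%N -> (0 < n)%N ->
      (iter m (S1 p q) @` setA p q K) `&` (iter n (S2 p q) @` setA p q K) = set0.

Definition calV {R : realType} : set (R * R) :=
  [set pq | 0 < pq.1 < 1/16 /\ 0 < pq.2 < 1/16].

Definition calK {R : realType} : set (R * R) :=
  [set pq | calV pq /\ twofold pq.1 pq.2].

(* If K_pq is not twofold then, for some m, n >= 1 and every k, a level-(k+1)
   cylinder interval of A scaled by p^m meets one scaled by q^n.  For fixed p
   and a fixed pair of cylinders, the set of such q has diameter at most the
   sum of the two cylinder lengths at q = 1/16: the left ends of cylinders move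
   with q at speed at most 2, whereas q^n moves at speed about q^(n-1), so the
   intersection is transversal.  Summing over the 4^(k+1) x 4^(k+1) pairs, the
   q-section of the exceptional set has measure at most 4 (8p + 1/2)^(k+1),
   which tends to 0 since p < 1/16; by Fubini the exceptional set is null.
   Conversely 1 is in K, so p^m = q^n puts p^m in S1^m(A) and in S2^n(A): this
   happens on the uncountable diagonal p = q and on a dense set of pairs. *)

From HB Require Import structures.
From mathcomp Require Import all_boot all_order all_algebra.
From mathcomp Require Import all_classical all_reals all_analysis.
From mathcomp Require Import ring lra zify measurable_realfun.
Import Order.TTheory GRing.Theory Num.Theory.
Import numFieldNormedType.Exports.
Local Open Scope classical_set_scope.
Local Open Scope ring_scope.
Set Implicit Arguments. Unset Strict Implicit. Unset Printing Implicit Defensive.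

Lemma exists_forall_antitone (N : nat) (P : nat -> nat -> Prop) :
  (forall k l i, (k <= l)%N -> P l i -> P k i) ->
  (forall k, exists2 i, (i < N)%N & P k i) -> exists2 i, (i < N)%N & forall k, P k i.
Proof.
elim: N => [|N IH] anti ex; first by have [] := ex 0%N.
have [allN|/existsNP [k0 nPk0]] := pselect (forall k, P k N); first by exists N.
have [|i iN Pi] := IH anti; last by exists i => //; exact: ltnW.
move=> k; have [i] := ex (k + k0)%N; rewrite ltnS leq_eqVlt => /predU1P [->|iN] Pi.
  by case: nPk0; apply: anti Pi; rewrite leq_addl.
by exists i => //; apply: anti Pi; rewrite leq_addr.
Qed.

Lemma sum_nat_mul (R : nmodType) d M (f : nat -> R) :
  \sum_(0 <= n < M * d) f n = \sum_(0 <= a < M) \sum_(0 <= b < d) f (a * d + b)%N.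
Proof.
elim: M => [|M IH]; first by rewrite mul0n !big_geq.
rewrite mulSn addnC (@big_cat_nat _ _ _ (M * d)) ?leq_addr //= [RHS]big_nat_recr //= IH.
congr (_ + _); rewrite -{1}(add0n (M * d)%N) big_addn addKn.
by apply: eq_bigr => b _; rewrite addnC.
Qed.

Lemma sum_pair_add (R : nmodType) N (f : nat -> R) :
  \sum_(i < N) \sum_(j < N) (f i + f j) = (\sum_(i < N) f i) *+ (2 * N).
Proof.
under eq_bigr do rewrite big_split /= sumr_const card_ord.
by rewrite big_split /= sumr_const card_ord sumrMnl -mulrnDr addnn -mul2n.
Qed.

Lemma measure_big_itv_le (R : realType) N (c d : nat -> nat -> R) :
    (forall i j, 0 <= d i j) ->
  (lebesgue_measure (\big[setU/set0]_(i < N) \big[setU/set0]_(j < N)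
     `[(c i j - d i j)%R, (c i j + d i j)%R]%classic) <=
   (\sum_(i < N) \sum_(j < N) 2 * d i j)%R%:E)%E.
Proof.
move=> d_ge0.
pose I i j : set (measurableTypeR R) := `[c i j - d i j, c i j + d i j]%classic.
pose F i := \big[setU/set0]_(j < N) I i j.
have mF i : measurable (F i) by apply: bigsetU_measurable => j _; exact: measurable_itv.
have I_le i j : (lebesgue_measure (I i j) <= (2 * d i j)%:E)%E.
  have := d_ge0 i j; rewrite lebesgue_measure_itv /=.
  by case: ifP => _ *; rewrite ?lee_fin -?EFinB ?lee_fin; lra.
have mU : measurable (\big[setU/set0]_(i < N) F i).
  by apply: bigsetU_measurable => i _; exact: mF.
apply: le_trans (@content_subadditive _ _ _ lebesgue_measure _ F N (fun i _ => mF i)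
  mU (fun x h => h)) _.
rewrite -sumEFin; apply: lee_sum => i _; rewrite -sumEFin.
apply: le_trans (@content_subadditive _ _ _ lebesgue_measure _ (I i) N
  (fun j _ => measurable_itv _) (mF i) (fun x h => h)) _.
by apply: lee_sum => j _; exact: I_le.
Qed.

Lemma exists_expr_lt (R : realType) (z e : R) :
  0 <= z < 1 -> 0 < e -> exists N : nat, z ^+ N < e.
Proof.
move=> /andP [z0 z1] e0.
have /cvgr_lt/(_ e e0) [N _ zN] := @cvg_expr R z ltac:(rewrite ger0_norm //).
by exists N; apply: zN => /=.
Qed.

Lemma le_expr_eq0 (R : realType) (x : \bar R) (c z : R) :
  0 <= z < 1 -> (0 <= x)%E -> (forall k, x <= (c * z ^+ k)%:E)%E -> x = 0%E.
Proof.
move=> z01 x0 xle; have xfin : x \is a fin_num.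
  by rewrite ge0_fin_numE //; apply: le_lt_trans (xle 0%N) _; rewrite ltey.
move: x0 xle; rewrite -(fineK xfin) lee_fin; set r := fine x => r0 xle.
congr (_%:E); apply/eqP; rewrite eq_le r0 andbT leNgt; apply/negP => r_gt0.
have c_gt0 : 0 < c by have := xle 0%N; rewrite lee_fin expr0 mulr1; lra.
have [N zN] := exists_expr_lt z01 (divr_gt0 r_gt0 c_gt0).
have := xle N; rewrite lee_fin; move: zN; rewrite ltr_pdivlMr //; lra.
Qed.

Lemma diam_le_sub_itv (R : realType) (J : set R) (d : R) :
  (forall x y, J x -> J y -> x <= y -> y - x <= d) ->
  exists c, J `<=` `[c - d, c + d]%classic.
Proof.
move=> Jd; have [[c Jc]|J0] := pselect (J !=set0); last first.
  by exists 0 => x Jx; case: J0; exists x.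
exists c => x Jx; rewrite /= in_itv /=.
by have [xc|/ltW cx] := leP x c; [have := Jd _ _ Jx Jc xc|have := Jd _ _ Jc Jx cx];
  move=> h; apply/andP; split; lra.
Qed.

Lemma expr_diff_ge (R : realFieldType) (x y : R) n :
  0 <= x -> x <= y -> x ^+ n * (y - x) <= y ^+ n.+1 - x ^+ n.+1.
Proof.
move=> x0 xy; have xy_n : x ^+ n <= y ^+ n by rewrite lerXn2r // nnegrE; lra.
have := exprn_ge0 n x0; rewrite !exprS; nra.
Qed.

Lemma exists_expr_between (R : realType) (y x : R) : 0 < y < 1 -> 0 < x < 1 ->
  exists2 j, (0 < j)%N & y ^+ j <= x < y ^+ j.-1.
Proof.
move=> /andP [y0 y1] /andP [x0 x1].
have ex : exists j, y ^+ j <= x.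
  have [j yj] := @exists_expr_lt _ y x ltac:(apply/andP; split; lra) x0.
  by exists j; rewrite ltW.
case: (ex_minnP ex) => j yj jmin.
have j0 : (0 < j)%N by case: j yj {jmin} => //; rewrite expr0; lra.
exists j => //; rewrite yj ltNge /=; apply/negP => /jmin.
by rewrite -{1}(prednK j0) ltnn.
Qed.

Lemma exists_root_near1 (R : realType) (x e : R) : 0 < x < 1 -> 0 < e ->
  exists N y, [/\ (0 < N)%N, 0 < y < 1, 1 - e <= y & y ^+ N = x].
Proof.
move=> /andP [x0 x1] e0; pose eta := Num.min e (1/2).
have eta0 : 0 < eta by rewrite lt_min e0 /=; lra.
have eta1 : eta <= 1/2 by rewrite ge_min lexx orbT.
have etae : eta <= e by rewrite ge_min lexx.
have [N etaN] := @exists_expr_lt _ (1 - eta) x ltac:(apply/andP; split; lra) x0.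
have N0 : (0 < N)%N by case: N etaN => //; rewrite expr0; lra.
pose y := x `^ N%:R^-1; have y0 : 0 < y by apply: powR_gt0.
have yN : y ^+ N = x.
  rewrite -powR_mulrn ?ltW // /y -powRrM mulVf ?powRr1 ?ltW //.
  by rewrite pnatr_eq0 -lt0n.
exists N, y; split => //.
  rewrite y0 ltNge; apply/negP => y_ge.
  have : 1 <= y ^+ N by exact: exprn_ege1.
  rewrite yN; lra.
rewrite leNgt; apply/negP => /ltW y_lt.
have : y ^+ N <= (1 - eta) ^+ N by apply: lerXn2r; rewrite ?nnegrE; lra.
rewrite yN; lra.
Qed.

(** * Cylinders of the attractor *)

Section cylinders.
Variables (R : realType) (p q : R).

Definition simil_ratio (i : nat) : R := if odd i then q else p.
Definition simil_offset (i : nat) : R := if (i < 2)%N then 0 else 1 - simil_ratio i.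
Definition simil (i : nat) (x : R) : R := simil_ratio i * x + simil_offset i.
Definition simil_inv (i : nat) (x : R) : R := (x - simil_offset i) / simil_ratio i.

(* simil 0, ..., simil 3 are S1, ..., S4 (lemma S_simil).  If i_1, ..., i_k
   are the base-4 digits of n, least significant first, then
   simil i_1 \o ... \o simil i_k maps [0, 1] onto the cylinder
   [cyl_lo k n, cyl_lo k n + cyl_len k n]; Acode k n says that i_1 is 2 or 3,
   i.e. that the cylinder lies in S3([0, 1]) or S4([0, 1]). *)
Fixpoint cyl_lo (k n : nat) : R :=
  if k is k'.+1 then simil (n %% 4) (cyl_lo k' (n %/ 4)) else 0.
Fixpoint cyl_len (k n : nat) : R :=
  if k is k'.+1 then simil_ratio (n %% 4) * cyl_len k' (n %/ 4) else 1.

Definition Acode (k n : nat) : bool := (n < 4 ^ k)%N && (2 <= n %% 4)%N.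

Definition hutchinson (X : set R) : set R :=
  (S1 p q @` X) `|` (S2 p q @` X) `|` (S3 p q @` X) `|` (S4 p q @` X).
Fixpoint hutch_iter (k : nat) : set R :=
  if k is k'.+1 then hutchinson (hutch_iter k') else `[0, 1]%classic.
Definition attractor : set R := \bigcap_k hutch_iter k.

Hypotheses (p_gt0 : 0 < p) (p_lt1 : p < 1) (q_gt0 : 0 < q) (q_lt1 : q < 1).

Lemma simil_ratio_gt0 i : 0 < simil_ratio i.
Proof. by rewrite /simil_ratio; case: odd. Qed.

Lemma simil_ratio_lt1 i : simil_ratio i < 1.
Proof. by rewrite /simil_ratio; case: odd. Qed.

Lemma S_simil :
  [/\ S1 p q = simil 0, S2 p q = simil 1, S3 p q = simil 2 & S4 p q = simil 3].
Proof.
by split; apply/funext => x;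
  rewrite /S1 /S2 /S3 /S4 /simil /simil_offset /simil_ratio /=; ring.
Qed.

Lemma similK i : cancel (simil i) (simil_inv i).
Proof.
by move=> x; rewrite /simil_inv /simil addrK [_ * x]mulrC mulfK // gt_eqF // simil_ratio_gt0.
Qed.

Lemma simil_invK i : cancel (simil_inv i) (simil i).
Proof.
by move=> x; rewrite /simil_inv /simil mulrC divfK ?subrK // gt_eqF // simil_ratio_gt0.
Qed.

Lemma simil_continuous i : continuous (simil i).
Proof.
move=> x; apply: continuousD; last exact: cst_continuous.
by apply: continuousM; [exact: cst_continuous | exact: cvg_id].
Qed.

Lemma simil01 i y : 0 <= y <= 1 -> 0 <= simil i y <= 1.
Proof.
have r0 := simil_ratio_gt0 i; have r1 := simil_ratio_lt1 i.
by rewrite /simil /simil_offset; case: ifP => _ /andP [y0 y1]; apply/andP; split; nra.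
Qed.

Lemma simil_cyl i c r y : c <= y <= c + r ->
  simil i c <= simil i y <= simil i c + simil_ratio i * r.
Proof. have := simil_ratio_gt0 i; rewrite /simil => ? ?; apply/andP; split; nra. Qed.

Lemma cyl_bounds k n :
  [/\ 0 <= cyl_lo k n, 0 <= cyl_len k n & cyl_lo k n + cyl_len k n <= 1].
Proof.
elim: k n => [|k IH] n /=; first by split; lra.
have [c0 r0 cr1] := IH (n %/ 4)%N.
have s0 := simil_ratio_gt0 (n %% 4); have s1 := simil_ratio_lt1 (n %% 4).
by rewrite /simil /simil_offset; case: ifP => _; split; nra.
Qed.

Lemma code_cons_ltn k n i : (n < 4 ^ k)%N -> (i < 4)%N -> (n * 4 + i < 4 ^ k.+1)%N.
Proof. by rewrite expnS; lia. Qed.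

Lemma cyl_cons k n i y : (i < 4)%N ->
    cyl_lo k n <= y <= cyl_lo k n + cyl_len k n ->
  cyl_lo k.+1 (n * 4 + i) <= simil i y <= cyl_lo k.+1 (n * 4 + i) + cyl_len k.+1 (n * 4 + i).
Proof.
move=> i4; rewrite /= modnMDl divnMDl // modn_small // divn_small // addn0.
exact: simil_cyl.
Qed.

Lemma hutchinsonP X x :
  hutchinson X x <-> exists2 i, (i < 4)%N & X (simil_inv i x).
Proof.
rewrite /hutchinson; have [-> -> -> ->] := S_simil; split.
  by case=> [[[|]|]|] [y Xy <-]; [exists 0%N|exists 1%N|exists 2%N|exists 3%N];
    rewrite // similK.
case=> -[|[|[|[|i]]]] // _ Xx; [left; left; left|left; left; right|left; right|right];
  by eexists; [exact: Xx | exact: simil_invK].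
Qed.

Lemma hutchinsonS X Y : X `<=` Y -> hutchinson X `<=` hutchinson Y.
Proof. by move=> XY x /hutchinsonP [i i4 /XY Yx]; apply/hutchinsonP; exists i. Qed.

Lemma hutch_iter_cyl k x : hutch_iter k x ->
  exists2 n, (n < 4 ^ k)%N & cyl_lo k n <= x <= cyl_lo k n + cyl_len k n.
Proof.
elim: k x => [|k IH] x /=.
  by rewrite in_itv /= add0r => x01; exists 0%N.
move=> /hutchinsonP [i i4 /IH [n n4k xn]]; exists (n * 4 + i)%N.
  exact: code_cons_ltn.
by rewrite -(simil_invK i x); exact: cyl_cons.
Qed.

Lemma hutch_iter01 k : hutch_iter k `<=` `[0, 1]%classic.
Proof.
elim: k => [|k IH] x //= /hutchinsonP [i _ /IH].
by rewrite !in_itv /= -{2 3}(simil_invK i x); exact: simil01.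
Qed.

Lemma hutch_iterS k : hutch_iter k.+1 `<=` hutch_iter k.
Proof. by elim: k => [|k IH]; [exact: hutch_iter01 | exact: hutchinsonS]. Qed.

Lemma hutch_iter_le k l : (k <= l)%N -> hutch_iter l `<=` hutch_iter k.
Proof.
move=> /subnK <-; elim: (l - k)%N => [|d IH] // x /hutch_iterS; exact: IH.
Qed.

Lemma hutch_iter0 k : hutch_iter k 0.
Proof.
elim: k => [|k IH] /=; first by rewrite in_itv /= lexx ler01.
by apply/hutchinsonP; exists 0%N => //; rewrite /simil_inv /simil_offset subr0 mul0r.
Qed.

Lemma hutch_iter_compact k : compact (hutch_iter k).
Proof.
elim: k => [|k IH] /=; first exact: segment_compact.
have cS i : compact (simil i @` hutch_iter k).
  apply: continuous_compact IH; apply: continuous_subspaceT; exact: simil_continuous.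
by rewrite /hutchinson; have [-> -> -> ->] := S_simil; do 3 apply: compactU => //.
Qed.

Lemma hutchinson_bigcap :
  \bigcap_k hutchinson (hutch_iter k) `<=` hutchinson attractor.
Proof.
move=> x Hx; apply/hutchinsonP.
have [|k|i i4 Ki] := @exists_forall_antitone 4 (fun k i => hutch_iter k (simil_inv i x)).
- by move=> k l i kl; apply: hutch_iter_le.
- by apply/hutchinsonP; exact: Hx.
- by exists i => // k _; exact: Ki.
Qed.

Lemma attractor_is_attractor : is_attractor p q attractor.
Proof.
split; first by exists 0 => k _; exact: hutch_iter0.
split.
  apply: (@subclosed_compact _ _ (hutch_iter 0)); last by move=> x; apply.
  - apply: closed_bigI => k _; apply: compact_closed; first exact: Rhausdorff.
    exact: hutch_iter_compact.
  - exact: hutch_iter_compact.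
apply/seteqP; split => x.
  by move=> Kx; apply: hutchinson_bigcap => k _; exact: (Kx k.+1).
move=> Hx k _; apply: hutch_iterS.
by apply: hutchinsonS Hx => y; apply.
Qed.

Lemma setA_cyl k a : setA p q attractor a ->
  exists2 n, Acode k.+1 n & cyl_lo k.+1 n <= a <= cyl_lo k.+1 n + cyl_len k.+1 n.
Proof.
have [_ _ S3E S4E] := S_simil.
have cylA i y : (2 <= i < 4)%N -> attractor y ->
    exists2 n, Acode k.+1 n & cyl_lo k.+1 n <= simil i y <= cyl_lo k.+1 n + cyl_len k.+1 n.
  move=> /andP [i2 i4] /(_ k I) /hutch_iter_cyl [n n4k yn]; exists (n * 4 + i)%N.
    by rewrite /Acode code_cons_ltn // modnMDl modn_small.
  exact: cyl_cons.
by rewrite /setA S3E S4E => -[] [y Ky <-]; apply: cylA.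
Qed.

End cylinders.

Lemma sum_cyl_len (R : realType) (p q : R) k :
  \sum_(0 <= n < 4 ^ k) cyl_len p q k n = (2 * p + 2 * q) ^+ k.
Proof.
elim: k => [|k IH]; first by rewrite expn0 big_nat1 expr0.
rewrite expnS mulnC sum_nat_mul exprSr -IH big_distrl /=.
apply: eq_bigr => a _; rewrite !big_nat_recr //= big_geq // add0r.
by rewrite !modnMDl !divnMDl // !divn_small // addn0 /simil_ratio /=; ring.
Qed.

Section iterates.
Variables (R : realType) (p q : R).

Lemma iter_S1 m x : iter m (S1 p q) x = p ^+ m * x.
Proof. by elim: m => [|m IH] /=; rewrite ?expr0 ?mul1r // IH /S1 exprS mulrA. Qed.

Lemma iter_S2 n x : iter n (S2 p q) x = q ^+ n * x.
Proof. by elim: n => [|n IH] /=; rewrite ?expr0 ?mul1r // IH /S2 exprS mulrA. Qed.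

Lemma iter_S3 j x : iter j (S3 p q) x = 1 - p ^+ j * (1 - x).
Proof. by elim: j => [|j IH] /=; rewrite ?IH /S3 (expr0, exprS); ring. Qed.

End iterates.

Lemma attractor_contains1 (R : realType) (p q : R) (K : set R) :
  0 < p < 1 -> is_attractor p q K -> K 1.
Proof.
move=> /andP [p0 p1] [[x Kx] [cK KE]].
have S3K j : K (iter j (S3 p q) x).
  by elim: j => [|j IH] //=; rewrite KE; left; right; exists (iter j (S3 p q) x).
have iter_cvg : (fun j => iter j (S3 p q) x) @ \oo --> (1 : R).
  have -> : (fun j => iter j (S3 p q) x) = cst 1 \- geometric (1 - x) p.
    by apply/funext => j; rewrite /= iter_S3 /geometric /= mulrC.
  rewrite -[X in _ --> X]subr0; apply: cvgB; first exact: cvg_cst.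
  by apply: cvg_geometric; rewrite ger0_norm ?ltW.
apply: closed_cvg iter_cvg; last exact: nearW.
by apply: compact_closed; [exact: Rhausdorff | exact: cK].
Qed.

(** * Transversality *)

Section small_ratios.
Variable R : realType.
Implicit Types p q : R.

Lemma small_cyl_bounds p q k n : 0 < p <= 1/16 -> 0 < q <= 1/16 ->
  [/\ 0 <= cyl_lo p q k n, 0 <= cyl_len p q k n & cyl_lo p q k n + cyl_len p q k n <= 1].
Proof. by move=> /andP [p0 p1] /andP [q0 q1]; apply: cyl_bounds; lra. Qed.

Lemma cyl_lo_lipschitz p q1 q2 k n :
  0 < p <= 1/16 -> 0 < q1 <= q2 -> q2 <= 1/16 ->
  `|cyl_lo p q2 k n - cyl_lo p q1 k n| <= 2 * (q2 - q1).
Proof.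
move=> hp /andP [q10 q12] q21; have /andP [p0 p1] := hp; rewrite ler_norml.
have hq1 : 0 < q1 <= 1/16 by apply/andP; split; lra.
have hq2 : 0 < q2 <= 1/16 by apply/andP; split; lra.
elim: k n => [|k IH] n /=; first by rewrite subrr; lra.
have [c1_ge0 r1_ge0 c1_le1] := small_cyl_bounds k (n %/ 4) hp hq1.
have [c2_ge0 r2_ge0 c2_le1] := small_cyl_bounds k (n %/ 4) hp hq2.
have /andP [IHl IHr] := IH (n %/ 4)%N.
move: c1_ge0 c1_le1 r1_ge0 c2_ge0 c2_le1 IHl IHr.
set c1 := cyl_lo p q1 k _; set c2 := cyl_lo p q2 k _.
move=> c1_ge0 c1_le1 r1_ge0 c2_ge0 c2_le1 IHl IHr.
have small s : 0 <= s <= 1/16 -> - ((q2 - q1) / 8) <= s * (c2 - c1) <= (q2 - q1) / 8.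
  move=> /andP [s0 s1].
  have f1 : 0 <= s * (c2 - c1 + 2 * (q2 - q1)) by apply: mulr_ge0; lra.
  have f2 : 0 <= s * (2 * (q2 - q1) - (c2 - c1)) by apply: mulr_ge0; lra.
  have f3 : 0 <= (1/16 - s) * (q2 - q1) by apply: mulr_ge0; lra.
  apply/andP; split; nra.
have /andP [pl pr] := small p ltac:(lra).
have /andP [ql qr] := small q2 ltac:(lra).
have Dc1 : 0 <= (q2 - q1) * c1 <= q2 - q1.
  have g1 : 0 <= (q2 - q1) * c1 by apply: mulr_ge0; lra.
  have g2 : 0 <= (q2 - q1) * (1 - c1) by apply: mulr_ge0; lra.
  apply/andP; split; nra.
have split_q : q2 * c2 - q1 * c1 = q2 * (c2 - c1) + (q2 - q1) * c1 by ring.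
by rewrite /simil /simil_offset /simil_ratio; case: odd; case: ifP => _;
  apply/andP; split; lra.
Qed.

Lemma cyl_len_le p q1 q2 k n :
  0 < p <= 1/16 -> 0 < q1 <= q2 -> q2 <= 1/16 -> cyl_len p q1 k n <= cyl_len p q2 k n.
Proof.
move=> hp /andP [q10 q12] q21; have /andP [p0 _] := hp.
have hq1 : 0 < q1 <= 1/16 by apply/andP; split; lra.
elim: k n => [|k IH] n //=; have [_ r0 _] := small_cyl_bounds k (n %/ 4) hp hq1.
by have := IH (n %/ 4)%N; rewrite /simil_ratio; case: odd => h; nra.
Qed.

Lemma Acyl_bounds p q k n :
  0 < p <= 1/16 -> 0 < q <= 1/16 -> (2 <= n %% 4)%N ->
  15/16 <= cyl_lo p q k.+1 n /\ cyl_len p q k.+1 n <= 1/16.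
Proof.
move=> hp hq n4 /=; have [c0 r0 cr1] := small_cyl_bounds k (n %/ 4) hp hq.
move: hp hq => /andP [p0 p1] /andP [q0 q1].
by rewrite /simil /simil_offset ltnNge n4 /= /simil_ratio; case: odd; split; nra.
Qed.

Definition scaled_cyl_meet (p q : R) (m n k n1 n2 : nat) : Prop :=
  p ^+ m * cyl_lo p q k n1 <= q ^+ n * (cyl_lo p q k n2 + cyl_len p q k n2) /\
  q ^+ n * cyl_lo p q k n2 <= p ^+ m * (cyl_lo p q k n1 + cyl_len p q k n1).

Lemma scaled_cyl_meet_pow_le (p q : R) m n k n1 n2 :
  0 < p <= 1/16 -> 0 < q <= 1/16 -> (2 <= n1 %% 4)%N ->
  scaled_cyl_meet p q m n k.+1 n1 n2 -> p ^+ m <= 16/15 * q ^+ n.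
Proof.
move=> hp hq n1A [meet _].
have [A1_ge _] := Acyl_bounds k hp hq n1A.
have [_ _ B1_le] := small_cyl_bounds k.+1 n2 hp hq.
have P_gt0 : 0 < p ^+ m by case/andP: hp => p0 _; exact: exprn_gt0.
have Q_gt0 : 0 < q ^+ n by case/andP: hq => q0 _; exact: exprn_gt0.
have : p ^+ m * (15/16) <= p ^+ m * cyl_lo p q k.+1 n1 by rewrite ler_pM2l.
nra.
Qed.

(* scaled_cyl_meet confines cyl_gap between - q^n cyl_len n2 and p^m cyl_len n1,
   while cyl_gap increases with q at rate at least about q^(n-1). *)
Definition cyl_gap (p q : R) (m n k n1 n2 : nat) : R :=
  q ^+ n * cyl_lo p q k n2 - p ^+ m * cyl_lo p q k n1.

Lemma cyl_gap_sub_le (p q1 q2 : R) m n k n1 n2 :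
    0 < p <= 1/16 -> 0 < q1 <= q2 -> q2 <= 1/16 ->
    scaled_cyl_meet p q1 m n k n1 n2 -> scaled_cyl_meet p q2 m n k n1 n2 ->
  cyl_gap p q2 m n k n1 n2 - cyl_gap p q1 m n k n1 n2 <=
    p ^+ m * cyl_len p (1/16) k n1 + q1 ^+ n * cyl_len p (1/16) k n2.
Proof.
move=> hp /andP [q10 q12] q21 [meet1 _] [_ meet2].
have /andP [p0 _] := hp.
have a2_le : cyl_len p q2 k n1 <= cyl_len p (1/16) k n1.
  by apply: cyl_len_le => //; apply/andP; split; lra.
have b1_le : cyl_len p q1 k n2 <= cyl_len p (1/16) k n2.
  by apply: cyl_len_le => //; apply/andP; split; lra.
have P_ge0 : 0 <= p ^+ m by rewrite exprn_ge0 // ltW.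
have Q_ge0 : 0 <= q1 ^+ n by rewrite exprn_ge0 // ltW.
have := ler_wpM2l P_ge0 a2_le; have := ler_wpM2l Q_ge0 b1_le.
rewrite /cyl_gap; lra.
Qed.

Lemma cyl_gap_sub_ge (p q1 q2 : R) m n k n1 n2 :
    0 < p <= 1/16 -> 0 < q1 <= q2 -> q2 <= 1/16 -> (2 <= n2 %% 4)%N ->
  q1 ^+ n * (q2 - q1) * (15/16) - 2 * q1 ^+ n.+1 * (q2 - q1) - 2 * p ^+ m * (q2 - q1) <=
    cyl_gap p q2 m n.+1 k.+1 n1 n2 - cyl_gap p q1 m n.+1 k.+1 n1 n2.
Proof.
move=> hp hq12 q21 n2A; have /andP [q10 q12] := hq12.
have hq2 : 0 < q2 <= 1/16 by apply/andP; split; lra.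
have [B2_ge _] := Acyl_bounds k hp hq2 n2A.
have /ler_normlP [_ dA2] := cyl_lo_lipschitz k.+1 n1 hp hq12 q21.
have /ler_normlP [dB1 _] := cyl_lo_lipschitz k.+1 n2 hp hq12 q21.
have Q_ge := expr_diff_ge n (ltW q10) q12.
have P_ge0 : 0 <= p ^+ m by case/andP: hp => p0 _; rewrite exprn_ge0 // ltW.
have Q1_ge0 : 0 <= q1 ^+ n.+1 by rewrite exprn_ge0 // ltW.
have TD_ge0 : 0 <= q1 ^+ n * (q2 - q1) by rewrite mulr_ge0 ?exprn_ge0 ?subr_ge0 // ltW.
have dB : - (2 * (q2 - q1)) <= cyl_lo p q2 k.+1 n2 - cyl_lo p q1 k.+1 n2 by lra.
have := ler_wpM2l (le_trans TD_ge0 Q_ge) B2_ge.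
have c_ge0 : 0 <= 15/16 :> R by lra.
have := ler_wpM2r c_ge0 Q_ge.
have := ler_wpM2l Q1_ge0 dB; have := ler_wpM2l P_ge0 dA2.
rewrite /cyl_gap; lra.
Qed.

Lemma scaled_cyl_meet_transversal (p q1 q2 : R) m n k n1 n2 :
    0 < p < 1/16 -> 0 < q1 <= q2 -> q2 < 1/16 ->
    (2 <= n1 %% 4)%N -> (2 <= n2 %% 4)%N ->
    scaled_cyl_meet p q1 m n.+1 k.+1 n1 n2 -> scaled_cyl_meet p q2 m n.+1 k.+1 n1 n2 ->
  q2 - q1 <= cyl_len p (1/16) k.+1 n1 + cyl_len p (1/16) k.+1 n2.
Proof.
move=> /andP [p0 p1] hq12 q21 n1A n2A meet1 meet2; have /andP [q10 q12] := hq12.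
have hp : 0 < p <= 1/16 by apply/andP; split; lra.
have hq1 : 0 < q1 <= 1/16 by apply/andP; split; lra.
have P_le := scaled_cyl_meet_pow_le hp hq1 n1A meet1.
have up := cyl_gap_sub_le hp hq12 (ltW q21) meet1 meet2.
have low := cyl_gap_sub_ge m n k n1 hp hq12 (ltW q21) n2A.
have h16 : 0 < (1/16 : R) <= 1/16 by apply/andP; split; lra.
have [_ R1_ge0 _] := small_cyl_bounds k.+1 n1 hp h16.
have [_ R2_ge0 _] := small_cyl_bounds k.+1 n2 hp h16.
move: P_le up low R1_ge0 R2_ge0; rewrite exprS.
set T := q1 ^+ n; set D := q2 - q1; set P := p ^+ m.
set R1 := cyl_len p _ _ n1; set R2 := cyl_len p _ _ n2.
move=> P_le up low R1_ge0 R2_ge0.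
have T_gt0 : 0 < T by exact: exprn_gt0.
have D_ge0 : 0 <= D by rewrite /D subr_ge0.
have := ler_wpM2r D_ge0 P_le; have := ler_wpM2r R1_ge0 P_le => PR1 PD.
have QR2 : 0 <= q1 * T * R2 by rewrite mulr_ge0 // mulr_ge0 // ltW.
have : T * (D * (15/16 - 62/15 * q1)) <= T * (16/15 * q1 * (R1 + R2)) by lra.
rewrite ler_pM2l // => main.
have : 16/15 * q1 * (R1 + R2) <= 1/15 * (R1 + R2) by nra.
have : D * (163/240) <= D * (15/16 - 62/15 * q1) by nra.
lra.
Qed.

End small_ratios.

(** * The exceptional set is null *)

Definition overlap_set (R : realType) (m n k : nat) : set (R * R) :=
  calV `&` \bigcup_(n1 in [set n | Acode k.+1 n]) \bigcup_(n2 in [set n | Acode k.+1 n])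
    [set pq | scaled_cyl_meet pq.1 pq.2 m n k.+1 n1 n2].

Definition exceptional_set (R : realType) : set (R * R) :=
  \bigcup_m \bigcup_n \bigcap_k overlap_set m.+1 n.+1 k.

Lemma not_twofold_exceptional (R : realType) : calV `\` calK `<=` @exceptional_set R.
Proof.
move=> [p q] [pqV pqNK].
have := pqV; rewrite /calV /= => -[/andP [p0 p1] /andP [q0 q1]].
have p01 : p < 1 by lra.
have q01 : q < 1 by lra.
have : ~ forall m n : nat, (0 < m)%N -> (0 < n)%N ->
    (iter m (S1 p q) @` setA p q (attractor p q)) `&`
    (iter n (S2 p q) @` setA p q (attractor p q)) = set0.
  move=> disj; apply: pqNK; split => //; exists (attractor p q).
  by split => //; exact: attractor_is_attractor.
move=> /existsNP [m /existsNP [n /not_implyP [m0 /not_implyP [n0]]]].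
move=> /eqP/set0P [z [[a Aa]]]; rewrite iter_S1 => az [b Ab]; rewrite iter_S2 => bz.
exists m.-1 => //; exists n.-1 => //; move=> k _; rewrite !prednK //; split => //.
have [n1 n1A /andP [a1 a2]] := setA_cyl p0 p01 q0 q01 k Aa.
have [n2 n2A /andP [b1 b2]] := setA_cyl p0 p01 q0 q01 k Ab.
exists n1 => //; exists n2 => //=.
have pm : 0 <= p ^+ m by rewrite exprn_ge0 // ltW.
have qn : 0 <= q ^+ n by rewrite exprn_ge0 // ltW.
split.
- by rewrite (le_trans (ler_wpM2l pm a1)) // az -bz ler_wpM2l.
- by rewrite (le_trans (ler_wpM2l qn b1)) // bz -az ler_wpM2l.
Qed.

Section measurability.
Variable R : realType.
Local Notation RR := (measurableTypeR R * measurableTypeR R)%type.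

Lemma measurable_simil_ratio i :
  measurable_fun [set: RR] (fun pq : RR => simil_ratio pq.1 pq.2 i).
Proof.
by rewrite /simil_ratio; case: odd; [exact: measurable_snd | exact: measurable_fst].
Qed.

Lemma measurable_simil_offset i :
  measurable_fun [set: RR] (fun pq : RR => simil_offset pq.1 pq.2 i).
Proof.
rewrite /simil_offset; case: (i < 2)%N; first exact: measurable_cst.
by apply: measurable_funB; [exact: measurable_cst | exact: measurable_simil_ratio].
Qed.

Lemma measurable_cyl_lo k n :
  measurable_fun [set: RR] (fun pq : RR => cyl_lo pq.1 pq.2 k n).
Proof.
elim: k n => [|k IH] n /=; first exact: measurable_cst.
apply: measurable_funD; last exact: measurable_simil_offset.
by apply: measurable_funM; [exact: measurable_simil_ratio | exact: IH].
Qed.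

Lemma measurable_cyl_len k n :
  measurable_fun [set: RR] (fun pq : RR => cyl_len pq.1 pq.2 k n).
Proof.
elim: k n => [|k IH] n /=; first exact: measurable_cst.
by apply: measurable_funM; [exact: measurable_simil_ratio | exact: IH].
Qed.

Lemma measurable_scaled_cyl_meet m n k n1 n2 :
  measurable [set pq : RR | scaled_cyl_meet pq.1 pq.2 m n k n1 n2].
Proof.
have mX1 : measurable_fun [set: RR] (fun pq : RR => pq.1 ^+ m).
  by apply: measurable_funX; exact: measurable_fst.
have mX2 : measurable_fun [set: RR] (fun pq : RR => pq.2 ^+ n).
  by apply: measurable_funX; exact: measurable_snd.
have mI n0 := measurable_funD (measurable_cyl_lo k n0) (measurable_cyl_len k n0).
have mle (f g : RR -> R) : measurable_fun setT f -> measurable_fun setT g ->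
    measurable [set pq | f pq <= g pq].
  by move=> mf mg; rewrite -[X in measurable X]setTI; exact: measurable_fun_le.
apply: (measurableI _ _ (mle _ _ _ _) (mle _ _ _ _)); apply: measurable_funM.
all: first [exact: mX1 | exact: mX2 | exact: measurable_cyl_lo | exact: mI].
Qed.

Lemma measurable_calV : measurable (calV : set RR).
Proof.
have -> : (calV : set RR) = `]0, 1/16[%classic `*` `]0, 1/16[%classic.
  by apply/seteqP; split => -[x y]; rewrite /calV /= !in_itv.
by apply: measurableX; exact: measurable_itv.
Qed.

Lemma measurable_overlap_set m n k : measurable (overlap_set m n k : set RR).
Proof.
apply: measurableI; first exact: measurable_calV.
do 2 (apply: bigcup_measurable => ? _); exact: measurable_scaled_cyl_meet.
Qed.

Lemma xsection_overlap_set_sub (p : R) m n k : 0 < p < 1/16 ->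
  exists c : nat -> nat -> R,
    xsection (overlap_set m n.+1 k : set RR) p `<=`
    \big[setU/set0]_(n1 < 4 ^ k.+1) \big[setU/set0]_(n2 < 4 ^ k.+1)
      `[c n1 n2 - (cyl_len p (1/16) k.+1 n1 + cyl_len p (1/16) k.+1 n2),
        c n1 n2 + (cyl_len p (1/16) k.+1 n1 + cyl_len p (1/16) k.+1 n2)]%classic.
Proof.
move=> hp; pose d n1 n2 := cyl_len p (1/16 : R) k.+1 n1 + cyl_len p (1/16) k.+1 n2.
pose J n1 n2 : set R := [set q | calV (p, q) /\
  [/\ Acode k.+1 n1, Acode k.+1 n2 & scaled_cyl_meet p q m n.+1 k.+1 n1 n2]].
have /choice [c Jc] : forall nn : nat * nat, exists c : R,
    J nn.1 nn.2 `<=` `[c - d nn.1 nn.2, c + d nn.1 nn.2]%classic.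
  move=> [n1 n2]; apply: diam_le_sub_itv => x y.
  move=> [[_ /andP [x0 _]] [/andP [_ n1A] /andP [_ n2A] meetx]].
  move=> [[_ /andP [_ y1]] [_ _ meety]] xy.
  apply: scaled_cyl_meet_transversal meetx meety => //; apply/andP; split => //.
pose c' n1 n2 := c (n1, n2); exists c'.
pose F n1 :=
  \big[setU/set0]_(n2 < 4 ^ k.+1) `[c' n1 n2 - d n1 n2, c' n1 n2 + d n1 n2]%classic.
move=> q qS; have : (p, q) \in overlap_set m n.+1 k by exact: qS.
rewrite inE => -[pqV [n1 n1A [n2 n2A meet]]].
rewrite -(bigcup_mkord _ F); exists n1; first by case/andP: n1A.
rewrite /F -(bigcup_mkord _ (fun n2 => `[c' n1 n2 - d n1 n2, c' n1 n2 + d n1 n2]%classic)).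
exists n2; first by case/andP: n2A.
by apply: (Jc (n1, n2)); split.
Qed.

Lemma xsection_overlap_set_le (p : R) m n k : 0 < p < 1/16 ->
  (lebesgue_measure (xsection (overlap_set m n.+1 k : set RR) p) <=
     (4 * (8 * p + 1/2) ^+ k.+1)%:E)%E.
Proof.
move=> hp; have /andP [p0 p1] := hp.
pose len n0 := cyl_len p (1/16 : R) k.+1 n0.
have len_ge0 n0 : 0 <= len n0.
  have hp' : 0 < p <= 1/16 by apply/andP; split; lra.
  have h16 : 0 < (1/16 : R) <= 1/16 by apply/andP; split; lra.
  by have [] := small_cyl_bounds k.+1 n0 hp' h16.
have [c sub] := xsection_overlap_set_sub m n k hp.
have mS : measurable (xsection (overlap_set m n.+1 k : set RR) p).
  by apply: measurable_xsection; exact: measurable_overlap_set.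
apply: le_trans (le_measure _ _ _ sub) _; rewrite ?inE //.
  by do 2 (apply: bigsetU_measurable => ? _); exact: measurable_itv.
have d_ge0 n1 n2 : 0 <= len n1 + len n2 by exact: addr_ge0.
apply: le_trans (measure_big_itv_le _ _ d_ge0) _.
rewrite lee_fin -/len; under eq_bigr do rewrite -mulr_sumr.
rewrite -mulr_sumr sum_pair_add -(big_mkord xpredT len) sum_cyl_len.
have -> : (2 * p + 2 * (1/16)) ^+ k.+1 *+ (2 * 4 ^ k.+1) = 2 * (8 * p + 1/2) ^+ k.+1.
  by rewrite -mulr_natl natrM natrX -mulrA -exprMn; congr (_ * _ ^+ _); lra.
lra.
Qed.

Lemma xsection_exceptional_null (p : R) m n :
  lebesgue_measure (xsection (\bigcap_k overlap_set m n.+1 k : set RR) p) = 0%E.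
Proof.
have [hp|hp] := pselect (0 < p < 1/16); last first.
  rewrite (_ : xsection _ p = set0) ?measure0 //; apply/seteqP; split => // q.
  by rewrite /xsection /= inE => /(_ 0%N I) [[/= ? _] _].
have /andP [p0 p1] := hp.
apply: (@le_expr_eq0 _ _ (4 * (8 * p + 1/2)) (8 * p + 1/2)).
- by apply/andP; split; lra.
- exact: measure_ge0.
move=> k; rewrite -mulrA -exprS; apply: le_trans (xsection_overlap_set_le m n k hp).
apply: le_measure; rewrite ?inE.
- by apply/measurable_xsection/bigcapT_measurable => j; exact: measurable_overlap_set.
- by apply: measurable_xsection; exact: measurable_overlap_set.
- by move=> q; rewrite /xsection /= !inE => /(_ k I).
Qed.

Lemma exceptional_set_negligible :
  (lebesgue_measure \x lebesgue_measure)%E.-negligible (@exceptional_set R : set RR).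
Proof.
have mE : measurable (@exceptional_set R : set RR).
  do 2 (apply: bigcupT_measurable => ?); apply: bigcapT_measurable => k.
  exact: measurable_overlap_set.
apply/negligibleP => //; apply: integral0_eq => p _ /=.
apply/negligibleP; first exact: measurable_xsection.
rewrite /exceptional_set xsection_bigcup; apply: negligible_bigcup => m.
rewrite xsection_bigcup; apply: negligible_bigcup => n; apply/negligibleP.
  by apply/measurable_xsection/bigcapT_measurable => k; exact: measurable_overlap_set.
exact: xsection_exceptional_null.
Qed.

End measurability.

(** * Pairs with p^j = q^N *)

Lemma pow_eq_not_twofold (R : realType) (p q : R) m n :
  0 < p < 1/16 -> 0 < q < 1/16 -> (0 < m)%N -> (0 < n)%N -> p ^+ m = q ^+ n ->
  (calV `\` calK) (p, q).
Proof.
move=> hp hq m0 n0 pq; split; first by split.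
rewrite /calK /= => -[_ [K [attrK disj]]].
have p01 : 0 < p < 1 by case/andP: hp => p0 p1; apply/andP; split; lra.
have K1 : K 1 := attractor_contains1 p01 attrK.
have A1 : setA p q K 1 by left; exists 1 => //; rewrite /S3; ring.
have := disj m n m0 n0; apply/eqP/set0P; exists (p ^+ m); split.
  by exists 1 => //; rewrite iter_S1 mulr1.
by exists 1 => //; rewrite iter_S2 mulr1 pq.
Qed.

Lemma calV_calK_uncountable (R : realType) : ~ countable (calV `\` @calK R).
Proof.
move=> /countable_injP [f injf].
have diag_bad x : `]0, (1/16 : R)[%classic x -> (calV `\` @calK R) (x, x).
  by rewrite /= in_itv /= => hx; apply: (@pow_eq_not_twofold _ _ _ 1 1).
have : countable (`]0, (1/16 : R)[%classic : set R).
  apply/countable_injP; exists (fun x => f (x, x)) => x y.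
  rewrite !inE => /diag_bad hx /diag_bad hy /injf.
  by rewrite !inE => /(_ hx hy) [].
move=> /countable_lebesgue_measure0; rewrite lebesgue_measure_itv /= lte_fin ifT; last lra.
by rewrite oppr0 adde0 => -[]; lra.
Qed.

Lemma exists_pow_eq_near (R : realType) (p0 q0 e : R) :
  0 < p0 < 1 -> 0 < q0 < 1 -> 0 < e ->
  exists q N j, [/\ 0 < q <= q0, q0 - q < e, (0 < N)%N, (0 < j)%N & p0 ^+ j = q ^+ N].
Proof.
move=> hp0 hq0 e0; have [N [y [N0 y01 y_ge yN]]] := exists_root_near1 hp0 e0.
have [j j0 /andP [yj_le yj_gt]] := exists_expr_between y01 hq0.
have /andP [y0 y1] := y01.
exists (y ^+ j), N, j; split => //.
- by rewrite exprn_gt0.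
- have yj1 : y ^+ j.-1 <= 1 by rewrite exprn_ile1 // ltW.
  move: yj_gt; rewrite -{2}(prednK j0) exprS; nra.
- by rewrite -yN -!exprM mulnC.
Qed.

Lemma calV_sub_closure (R : realType) : calV `<=` closure (calV `\` @calK R).
Proof.
move=> [p0 q0]; rewrite /calV /= => -[/andP [p0_gt0 p0_lt] /andP [q0_gt0 q0_lt]].
move=> B /nbhs_ballP [e e0 eB].
have hp0 : 0 < p0 < 1 by apply/andP; split; lra.
have hq0 : 0 < q0 < 1 by apply/andP; split; lra.
have [q [N [j [/andP [q_gt0 q_le] q0q N0 j0 pq]]]] := exists_pow_eq_near hp0 hq0 e0.
exists (p0, q); split.
  by apply: (pow_eq_not_twofold _ _ j0 N0 pq); apply/andP; split; lra.
apply: eB; split => /=; first exact: ballxx.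
by rewrite /ball /= ger0_norm; lra.
Qed.

Unset Implicit Arguments.

Theorem theorem19 (R : realType) :
  ((@lebesgue_measure R) \x (@lebesgue_measure R))%E.-negligible
     (calV `\` calK) /\
  ~ countable (calV `\` (@calK R)) /\
  calV `<=` closure (calV `\` (@calK R)).
Proof.
split.
  apply: (negligibleS _ (exceptional_set_negligible R)).
  exact: not_twofold_exceptional.
split; [exact: calV_calK_uncountable | exact: calV_sub_closure].
Qed.
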